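(* Consider the multi-subflow routing problem described in the context. Assume $e_{ij}^k(\mathbf{y})>0$ for all $(i,j)\in\mathcal{A}$, all $k$ and all $\mathbf{y}\in\{0,1\}^N$, that at least one directed path from $1$ to $n$ exists, and that every subflow must recharge: for every routing $x$ in which each $x^k$ is the indicator of a simple directed $1$–$n$ path $P^k$, and every $k$, $\sum_{(i,j)\in P^k} e_{ij}^k(\mathbf{x}_{ij})>E_1^k$. Consider the routing-only problem $$\text{(R)}\quad\min_{x}\ \sum_{(i,j)\in\mathcal{A}}\sum_{k=1}^N\Bigl(\tau_{ij}^k(\mathbf{x}_{ij})+g\,e_{ij}^k(\mathbf{x}_{ij})\,x_{ij}^k\Bigr)$$ over all $x=(x_{ij}^k)$ such that, for each $k$, the arcs with $x_{ij}^k=1$ form a simple directed path from $1$ to $n$. Then the multi-subflow routing problem has an optimal solution, its optimal value equals $(\text{optimal value of (R)})-g\sum_{k=1}^N E_1^k$, and for every optimal solution $(x^*,r^*,E^* )$ of the multi-subflow routing problem, $x^*$ is an optimal solution of (R).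
   Context: Let $G=(\mathcal{N},\mathcal{A})$ be a directed graph with $\mathcal{N}=\{1,\dots,n\}$, $n\ge2$, $I(i)=\{j:(j,i)\in\mathcal{A}\}$, $O(i)=\{j:(i,j)\in\mathcal{A}\}$, with $I(1)=\emptyset$ and $O(n)=\emptyset$ (origin $1$, destination $n$). There are $N\ge1$ vehicle subflows $k=1,\dots,N$. Decision variables: $x_{ij}^k\in\{0,1\}$ for $(i,j)\in\mathcal{A}$ and each $k$, recharging amounts $r_i^k\ge0$ for $i\in\mathcal{N}$ and each $k$, and residual energies $E_j^k$, $j=2,\dots,n$. Write $\mathbf{x}_{ij}=(x_{ij}^1,\dots,x_{ij}^N)\in\{0,1\}^N$. For each arc and each $k$ there are given real-valued functions $\tau_{ij}^k(\mathbf{x}_{ij})$ (travel time of subflow $k$ on arc $(i,j)$, depending on congestion) and $e_{ij}^k(\mathbf{x}_{ij})$ (energy consumption of subflow $k$ on arc $(i,j)$). Given constants: initial energies $E_1^k\ge0$ and $g>0$ (charging time per unit energy). A triple $(x,r,E)$ is feasible if for every $k$: (a) the arcs with $x_{ij}^k=1$ form a simple directed path from $1$ to $n$; (b) $E_j^k=\sum_{i\in I(j)}\bigl(E_i^k+r_i^k-e_{ij}^k(\mathbf{x}_{ij})\bigr)x_{ij}^k$ for $j=2,\dots,n$; (c) $E_i^k\ge0$ for all $i$. The objective to be minimized is $J(x,r)=\sum_{(i,j)\in\mathcal{A}}\sum_{k=1}^N\bigl(\tau_{ij}^k(\mathbf{x}_{ij})+g\,r_i^k x_{ij}^k\bigr)$.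 An optimal solution is a feasible solution minimizing $J$. *)

From HB Require Import structures.
From mathcomp Require Import all_boot all_order all_algebra.
Set Implicit Arguments. Unset Strict Implicit. Unset Printing Implicit Defensive.
Import Order.TTheory GRing.Theory Num.Theory.
Local Open Scope ring_scope.

(* Nodes are 'I_n; arcs are given by a relation A : rel 'I_n ((i,j) is an arc
   iff A i j).  A routing x assigns to each ordered pair
   (i,j) the vector x_ij = (x_ij^1,...,x_ij^N) in {0,1}^N (only arcs matter). *)

Definition routing (n N : nat) := 'I_n -> 'I_n -> {ffun 'I_N -> bool}.

Definition simple_path_arcs (n : nat) (A : rel 'I_n) (S : 'I_n -> 'I_n -> bool)
    (s t : 'I_n) : Prop :=
  exists p : seq 'I_n,
    [/\ path A s p, last s p = t, uniq (s :: p) &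
        forall i j, A i j -> S i j = ((i, j) \in zip (s :: p) p)].

Definition valid_routing (n N : nat) (A : rel 'I_n) (s t : 'I_n)
    (x : routing n N) : Prop :=
  forall k : 'I_N, simple_path_arcs A (fun i j => x i j k) s t.

(* residual energy, with the given initial energy E1 at the origin s;
   the decision variables E are those at nodes j <> s *)
Definition Eext (R : realFieldType) (n N : nat) (s : 'I_n) (E1 : 'I_N -> R)
    (E : 'I_n -> 'I_N -> R) (i : 'I_n) (k : 'I_N) : R :=
  if i == s then E1 k else E i k.

Definition feasible (R : realFieldType) (n N : nat) (A : rel 'I_n) (s t : 'I_n)
    (e : 'I_n -> 'I_n -> 'I_N -> {ffun 'I_N -> bool} -> R) (E1 : 'I_N -> R)
    (x : routing n N) (r : 'I_n -> 'I_N -> R) (E : 'I_n -> 'I_N -> R) : Prop :=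
  [/\ valid_routing A s t x,
      (forall i k, 0 <= r i k),
      (forall j k, j != s ->
         E j k = \sum_(i : 'I_n | A i j)
                   (Eext s E1 E i k + r i k - e i j k (x i j)) * (x i j k)%:R) &
      (forall i k, 0 <= Eext s E1 E i k)].

Definition Jobj (R : realFieldType) (n N : nat) (A : rel 'I_n)
    (tau : 'I_n -> 'I_n -> 'I_N -> {ffun 'I_N -> bool} -> R) (g : R)
    (x : routing n N) (r : 'I_n -> 'I_N -> R) : R :=
  \sum_(i : 'I_n) \sum_(j : 'I_n | A i j) \sum_(k : 'I_N)
     (tau i j k (x i j) + g * r i k * (x i j k)%:R).

Definition JRobj (R : realFieldType) (n N : nat) (A : rel 'I_n)
    (tau e : 'I_n -> 'I_n -> 'I_N -> {ffun 'I_N -> bool} -> R) (g : R)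
    (x : routing n N) : R :=
  \sum_(i : 'I_n) \sum_(j : 'I_n | A i j) \sum_(k : 'I_N)
     (tau i j k (x i j) + g * e i j k (x i j) * (x i j k)%:R).

Definition optimal_MSR (R : realFieldType) (n N : nat) (A : rel 'I_n) (s t : 'I_n)
    (tau e : 'I_n -> 'I_n -> 'I_N -> {ffun 'I_N -> bool} -> R) (g : R)
    (E1 : 'I_N -> R) (x : routing n N) (r : 'I_n -> 'I_N -> R)
    (E : 'I_n -> 'I_N -> R) : Prop :=
  feasible A s t e E1 x r E /\
  forall x' r' E', feasible A s t e E1 x' r' E' -> Jobj A tau g x r <= Jobj A tau g x' r'.

Definition optimal_R (R : realFieldType) (n N : nat) (A : rel 'I_n) (s t : 'I_n)
    (tau e : 'I_n -> 'I_n -> 'I_N -> {ffun 'I_N -> bool} -> R) (g : R)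
    (x : routing n N) : Prop :=
  valid_routing A s t x /\
  forall x', valid_routing A s t x' -> JRobj A tau e g x <= JRobj A tau e g x'.

From HB Require Import structures.
From mathcomp Require Import all_boot all_order all_algebra.
From mathcomp Require Import ring.
From Stdlib Require Import ClassicalEpsilon FunctionalExtensionality.
Import Order.TTheory GRing.Theory Num.Theory.
Local Open Scope ring_scope.
Set Implicit Arguments. Unset Strict Implicit.

(* Fix a feasible (x, r, E).  Along the simple path of subflow k
   the energy-balance constraint reads E_j = E_i + r_i - e_ij on every path arc
   (i, j), so summing over the path telescopes to
       sum of r along the path = E_t - E_1 + sum of e along the path.
   Summing over k, the objective splits as
       J(x, r) = JR(x) - g * sum_k E_1^k + g * sum_k E_t^k,            (decomp)
   and since E_t >= 0 and g > 0, J(x, r) >= JR(x) - g * sum_k E_1^k.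
   Conversely, for any valid routing x, recharging at the origin exactly the
   energy the path needs beyond E_1 (nonnegative by the recharge hypothesis)
   and carrying the "energy still to go" as residual energy gives a feasible
   (r, E) with E_t = 0, attaining the bound.  Hence MSR and (R) share their
   minimizers up to the constant shift; (R) has a minimizer because routings
   range over a finite set. *)

Section PathArcs.
Variable T : eqType.

Lemma mem_zip_path (a : T) l u :
  u \in zip (a :: l) l -> (u.1 \in a :: l) /\ (u.2 \in l).
Proof.
elim: l a => [|b l IH] a //=; rewrite in_cons => /orP[/eqP -> /=|/IH [H1 H2]].
  by rewrite !in_cons !eqxx ?orbT.
by split; apply/orP; right.
Qed.

Lemma zip_path_arc (A : rel T) a l u :
  path A a l -> u \in zip (a :: l) l -> A u.1 u.2.
Proof.
elim: l a => [|b l IH] a //= /andP[Hab Hp].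
by rewrite in_cons => /orP[/eqP -> //|]; exact: IH.
Qed.

Lemma zip_path_pred_unique (a : T) l i i' j : uniq (a :: l) ->
  (i, j) \in zip (a :: l) l -> (i', j) \in zip (a :: l) l -> i = i'.
Proof.
elim: l a => [|b l IH] a //=; rewrite in_cons => /andP[_ /andP[Hbl Hu]].
move=> /orP[/eqP [-> Hj]|H1] /orP[/eqP [-> Hj']|H2] //.
- by have [_ /= H] := mem_zip_path H2; rewrite -Hj H in Hbl.
- by have [_ /= H] := mem_zip_path H1; rewrite -Hj' H in Hbl.
- by apply: (IH b) => //=; rewrite Hbl Hu.
Qed.

Lemma zip_path_pred_exists (a : T) l j :
  j \in l -> exists i, (i, j) \in zip (a :: l) l.
Proof.
elim: l a => [|b l IH] a //=; rewrite in_cons => /orP[/eqP ->|/(IH b) [i Hi]].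
  by exists a; rewrite in_cons eqxx.
by exists i; rewrite in_cons Hi orbT.
Qed.

Lemma telescope_zip_path (R : zmodType) (F : T -> R) a l :
  \sum_(u <- zip (a :: l) l) (F u.2 - F u.1) = F (last a l) - F a.
Proof.
elim: l a => [|b l IH] a /=; first by rewrite big_nil subrr.
by rewrite big_cons IH /= addrC addrA subrK.
Qed.

End PathArcs.

Section EnergyToGo.
Variables (R : realDomainType) (T : eqType) (w : T -> T -> R).

Definition path_weight (a : T) (l : seq T) : R :=
  \sum_(u <- zip (a :: l) l) w u.1 u.2.

(* the weight of the part of the path a :: l after node v (0 off the path):
   the residual energy a vehicle arriving with no spare energy has at v *)
Fixpoint energy_to_go (a : T) (l : seq T) (v : T) : R :=
  if v == a then path_weight a l
  else if l is b :: l' then energy_to_go b l' v else 0.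

Lemma energy_to_go_head a l : energy_to_go a l a = path_weight a l.
Proof. by case: l => [|b l] /=; rewrite eqxx. Qed.

Lemma energy_to_go_arc a l i j : uniq (a :: l) ->
  (i, j) \in zip (a :: l) l -> energy_to_go a l i = w i j + energy_to_go a l j.
Proof.
elim: l a => [|b l IH] a //=.
rewrite !in_cons negb_or => /andP[/andP[Hab Hal] Hu] /orP[/eqP [-> ->]|H].
  by rewrite eqxx eq_sym (negbTE Hab) energy_to_go_head /path_weight big_cons.
have [/= H1 H2] := mem_zip_path H.
have -> : (i == a) = false.
  apply/eqP => Ei; move: H1; rewrite in_cons -Ei in Hab Hal *.
  by rewrite (negbTE Hab) (negbTE Hal).
have -> : (j == a) = false by apply/eqP => Ej; rewrite -Ej H2 in Hal.
exact: IH.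
Qed.

Lemma energy_to_go_off a l v : v \notin a :: l -> energy_to_go a l v = 0.
Proof.
elim: l a => [|b l IH] a /=; rewrite in_cons negb_or => /andP[/negbTE -> H] //.
exact: IH.
Qed.

Lemma energy_to_go_last a l : uniq (a :: l) -> energy_to_go a l (last a l) = 0.
Proof.
elim: l a => [|b l IH] a /=; first by rewrite eqxx /path_weight big_nil.
rewrite in_cons negb_or => /andP[/andP[Hab Hal] Hu].
have : last b l \in b :: l by exact: mem_last.
case: eqP => [->|_ _]; first by rewrite in_cons (negbTE Hab) (negbTE Hal).
exact: IH.
Qed.

Variable A : rel T.
Hypothesis (w_ge0 : forall i j, A i j -> 0 <= w i j).

Lemma path_weight_ge0 a l : path A a l -> 0 <= path_weight a l.
Proof.
by move=> Hp; rewrite /path_weight big_seq sumr_ge0 // => u /(zip_path_arc Hp) /w_ge0.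
Qed.

Lemma energy_to_go_ge0 a l v : path A a l -> 0 <= energy_to_go a l v.
Proof.
elim: l a => [|b l IH] a /=; first by case: (v == a); rewrite // /path_weight big_nil.
move=> Hp; case: (v == a); first exact: path_weight_ge0.
by apply: IH; case/andP: Hp.
Qed.

End EnergyToGo.

Section SelectedArcs.
Variables (R : pzRingType) (n : nat) (A : rel 'I_n).
Variables (z : seq ('I_n * 'I_n)) (y : 'I_n -> 'I_n -> bool).
Hypothesis y_def : forall i j, A i j -> y i j = ((i, j) \in z).

Lemma sum_selected_arcs (F : 'I_n -> 'I_n -> R) :
  uniq z -> (forall u, u \in z -> A u.1 u.2) ->
  \sum_i \sum_(j | A i j) F i j * (y i j)%:R = \sum_(u <- z) F u.1 u.2.
Proof.
move=> Hu HA.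
rewrite (pair_big_dep xpredT (fun i j => A i j) (fun i j => F i j * (y i j)%:R)) /=.
rewrite (big_uniq _ Hu) /= big_mkcond [RHS]big_mkcond /=.
apply: eq_bigr => -[i j] _ /=; case Hij: (A i j) => /=.
  by rewrite y_def //; case: ((i, j) \in z); rewrite ?mulr1 ?mulr0.
by case Hz: ((i, j) \in z) => //; move: (HA _ Hz); rewrite /= Hij.
Qed.

Lemma sum_in_arc (G : 'I_n -> R) i j :
  A i j -> (i, j) \in z -> (forall i', (i', j) \in z -> i' = i) ->
  \sum_(i' | A i' j) G i' * (y i' j)%:R = G i.
Proof.
move=> HA Hz Hun.
rewrite (bigD1 i) //= y_def // Hz mulr1 big1 ?addr0 // => i' /andP[Hi' Hne].
rewrite y_def //; case Hz': ((i', j) \in z); last by rewrite mulr0.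
by rewrite (Hun _ Hz') eqxx in Hne.
Qed.

End SelectedArcs.

Lemma objective_split (R : pzRingType) (n N : nat) (A : rel 'I_n)
    (a w : 'I_n -> 'I_n -> 'I_N -> R) (y : 'I_n -> 'I_n -> 'I_N -> bool) (g : R) :
  \sum_i \sum_(j | A i j) \sum_k (a i j k + g * w i j k * (y i j k)%:R)
  = \sum_i \sum_(j | A i j) \sum_k a i j k
    + g * \sum_k \sum_i \sum_(j | A i j) w i j k * (y i j k)%:R.
Proof.
have -> : \sum_k \sum_i \sum_(j | A i j) w i j k * (y i j k)%:R
    = \sum_i \sum_(j | A i j) \sum_k w i j k * (y i j k)%:R.
  by rewrite exchange_big /=; apply: eq_bigr => i _; rewrite exchange_big.
rewrite mulr_sumr -big_split /=; apply: eq_bigr => i _.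
rewrite mulr_sumr -big_split /=; apply: eq_bigr => j _.
by rewrite mulr_sumr -big_split /=; apply: eq_bigr => k _; rewrite mulrA.
Qed.

Section Network.
Variables (R : realFieldType) (n N : nat) (A : rel 'I_n) (s t : 'I_n).
Variables (tau e : 'I_n -> 'I_n -> 'I_N -> {ffun 'I_N -> bool} -> R).
Variables (g : R) (E1 : 'I_N -> R).

Lemma energy_balance x r E (k : 'I_N) : feasible A s t e E1 x r E ->
  \sum_i \sum_(j | A i j) r i k * (x i j k)%:R =
  Eext s E1 E t k - E1 k + \sum_i \sum_(j | A i j) e i j k (x i j) * (x i j k)%:R.
Proof.
case=> Hv _ HE _; have [p [Hp Hl Hu Hx]] := Hv k.
have Hzu := zip_uniql p Hu.
have HzA u : u \in zip (s :: p) p -> A u.1 u.2 := zip_path_arc Hp.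
rewrite !(sum_selected_arcs Hx _ Hzu HzA).
set F := fun i => Eext s E1 E i k.
have arc_balance : {in zip (s :: p) p, forall u,
    r u.1 k = (F u.2 - F u.1) + e u.1 u.2 k (x u.1 u.2)}.
  move=> [i j] Hz /=; have [_ Hj] := mem_zip_path Hz.
  have Hjs : j != s by apply: contraTneq Hu => <-; rewrite /= Hj.
  have Hun i' : (i', j) \in zip (s :: p) p -> i' = i.
    by move=> Hz'; apply: zip_path_pred_unique Hu Hz' Hz.
  have := HE j k Hjs; rewrite (sum_in_arc Hx _ (HzA _ Hz) Hz Hun).
  by rewrite /F /Eext (negbTE Hjs) /= => ->; ring.
rewrite (eq_big_seq _ arc_balance) big_split /= telescope_zip_path Hl /F /Eext eqxx.
ring.
Qed.

Lemma objective_decomposition x r E : feasible A s t e E1 x r E ->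
  Jobj A tau g x r = JRobj A tau e g x - g * \sum_k E1 k + g * \sum_k Eext s E1 E t k.
Proof.
move=> Hf; rewrite /Jobj /JRobj.
rewrite (objective_split A (fun i j k => tau i j k (x i j)) (fun i j k => r i k)).
rewrite (objective_split A (fun i j k => tau i j k (x i j)) (fun i j k => e i j k (x i j))).
by rewrite (eq_bigr _ (fun k _ => energy_balance k Hf)) !big_split /= sumrN; ring.
Qed.

Hypothesis g_ge0 : 0 <= g.

Lemma objective_lower_bound x r E : feasible A s t e E1 x r E ->
  JRobj A tau e g x - g * \sum_k E1 k <= Jobj A tau g x r.
Proof.
move=> Hf; rewrite (objective_decomposition Hf) lerDl.
by rewrite mulr_ge0 // sumr_ge0 // => k _; case: Hf => _ _ _ ->.
Qed.

Hypotheses (t_neq_s : t != s) (E1_ge0 : forall k, 0 <= E1 k).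
Hypothesis e_gt0 : forall i j k y, A i j -> 0 < e i j k y.

(* The energy-to-go profile of a simple path from s satisfies the balance
   equations E_j = sum_i (E_i + r_i - w_ij) y_ij at every node j != s, where
   Ein i stands for the energy E_i + r_i available when leaving i. *)
Lemma energy_to_go_balance (p : seq 'I_n) (y : 'I_n -> 'I_n -> bool)
    (w : 'I_n -> 'I_n -> R) (Ein : 'I_n -> R) j :
  path A s p -> uniq (s :: p) ->
  (forall i j, A i j -> y i j = ((i, j) \in zip (s :: p) p)) ->
  (forall i, Ein i = energy_to_go w s p i) -> j != s ->
  energy_to_go w s p j = \sum_(i | A i j) (Ein i - w i j) * (y i j)%:R.
Proof.
move=> Hp Hu Hy Ein_def Hjs; have [Hj|Hj] := boolP (j \in p).
  have [i Hz] := zip_path_pred_exists s Hj.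
  have Hun i' : (i', j) \in zip (s :: p) p -> i' = i.
    by move=> Hz'; apply: zip_path_pred_unique Hu Hz' Hz.
  rewrite (sum_in_arc Hy _ (zip_path_arc Hp Hz) Hz Hun) Ein_def.
  by rewrite (energy_to_go_arc w Hu Hz) addrC addKr.
rewrite energy_to_go_off ?in_cons ?negb_or ?Hjs // big1 // => i Hij.
rewrite Hy //; case Hz: ((i, j) \in _); last by rewrite mulr0.
by have [_ /= Hjp] := mem_zip_path Hz; rewrite Hjp in Hj.
Qed.

(* Attainment: recharge at the origin what the path needs beyond E_1, and
   keep the energy still to go as residual energy; then E_t = 0. *)
Lemma tight_completion x : valid_routing A s t x ->
  (forall k : 'I_N, E1 k < \sum_i \sum_(j | A i j && x i j k) e i j k (x i j)) ->
  exists r E, feasible A s t e E1 x r E /\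
              Jobj A tau g x r = JRobj A tau e g x - g * \sum_k E1 k.
Proof.
move=> Hv Hrech; have [p Hp] := fin_all_exists Hv.
pose w k i j := e i j k (x i j).
have w_ge0 k i j : A i j -> 0 <= w k i j by move=> Hij; exact/ltW/e_gt0.
pose r i k := if i == s then path_weight (w k) s (p k) - E1 k else 0.
pose E j k := energy_to_go (w k) s (p k) j.
have E_t k : Eext s E1 E t k = 0.
  have [_ Hl Hu _] := Hp k.
  by rewrite /Eext (negbTE t_neq_s) /E -Hl energy_to_go_last.
have Hf : feasible A s t e E1 x r E.
  split=> // [i k|j k Hjs|i k]; have [Hpk _ Hu Hx] := Hp k.
  - have need : \sum_i \sum_(j | A i j && x i j k) e i j k (x i j)
                 = path_weight (w k) s (p k).
      rewrite /path_weight -(sum_selected_arcs Hx _ (zip_uniql _ Hu)).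
        apply: eq_bigr => i' _; rewrite big_mkcondr /=.
        by apply: eq_bigr => j _; case: (x i' j k); rewrite ?mulr1 ?mulr0.
      by move=> u; exact: zip_path_arc Hpk.
    by rewrite /r; case: (i == s); rewrite // subr_ge0 -need ltW.
  - pose Ein i := Eext s E1 E i k + r i k.
    rewrite /E (energy_to_go_balance (Ein := Ein) Hpk Hu Hx _ Hjs) //.
    move=> i; rewrite /Ein /Eext /r /E; case: eqP => [->|_]; last by rewrite addr0.
    by rewrite energy_to_go_head addrC subrK.
  - by rewrite /Eext; case: (i == s) => //; exact: energy_to_go_ge0 (w_ge0 k) _ _ _ Hpk.
exists r, E; split=> //.
rewrite (objective_decomposition Hf).
have -> : \sum_k Eext s E1 E t k = 0 by apply: big1 => k _; exact: E_t.
by rewrite mulr0 addr0.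
Qed.

End Network.

Lemma finite_minimizer (R : realDomainType) (T : finType) (P : T -> Prop) (f : T -> R) :
  (exists x, P x) -> exists x, P x /\ forall y, P y -> f x <= f y.
Proof.
move=> [x0 Px0].
pose Pb x : bool := if excluded_middle_informative (P x) then true else false.
have PbP x : reflect (P x) (Pb x).
  by rewrite /Pb; case: excluded_middle_informative => Px; constructor.
have Pbx0 : Pb x0 by apply/PbP.
by case: (arg_minP f Pbx0) => m /PbP Pm minm; exists m; split=> // y /PbP /minm.
Qed.

(* The routing problem (R) has an optimal solution as soon as some A-path
   joins s to t: routings form a finite set, and shortening such a path gives
   a simple one. *)
Lemma routing_problem_optimum (R : realFieldType) (n N : nat) (A : rel 'I_n)
    (s t : 'I_n) (tau e : 'I_n -> 'I_n -> 'I_N -> {ffun 'I_N -> bool} -> R) (g : R) :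
  (exists p, path A s p /\ last s p = t) -> exists x, optimal_R A s t tau e g x.
Proof.
move=> [p [Hp Hl]].
pose dec (X : {ffun 'I_n * 'I_n -> {ffun 'I_N -> bool}}) : routing n N :=
  fun i j => X (i, j).
have dec_onto (x : routing n N) : dec [ffun u => x u.1 u.2] = x.
  by apply: functional_extensionality => i; apply: functional_extensionality => j;
     rewrite /dec ffunE.
have [X [HX minX]] : exists X, valid_routing A s t (dec X) /\ forall Y,
    valid_routing A s t (dec Y) -> JRobj A tau e g (dec X) <= JRobj A tau e g (dec Y).
  apply: finite_minimizer; move: Hl; case: (shortenP Hp) => p' Hp' Hu _ Hl.
  exists [ffun u => [ffun k : 'I_N => u \in zip (s :: p') p']].
  by move=> k; exists p'; split=> // i j _; rewrite /dec !ffunE.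
by exists (dec X); split=> // x Hx; rewrite -(dec_onto x); apply: minX; rewrite dec_onto.
Qed.

Theorem mainTheorem6 (R : realFieldType) (n N : nat) (hn : (2 <= n)%N) (hN : (1 <= N)%N)
    (s t : 'I_n) (hs : val s = 0%N) (ht : val t = n.-1)
    (A : rel 'I_n) (hIs : forall j, ~~ A j s) (hOt : forall j, ~~ A t j)
    (tau e : 'I_n -> 'I_n -> 'I_N -> {ffun 'I_N -> bool} -> R)
    (E1 : 'I_N -> R) (g : R)
    (hE1 : forall k, 0 <= E1 k) (hg : 0 < g)
    (he : forall i j k y, A i j -> 0 < e i j k y)
    (hpath : exists p : seq 'I_n, path A s p /\ last s p = t)
    (hrech : forall x : routing n N, valid_routing A s t x ->
       forall k : 'I_N,
         E1 k < \sum_(i : 'I_n) \sum_(j : 'I_n | A i j && x i j k) e i j k (x i j)) :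
  (exists x r E, optimal_MSR A s t tau e g E1 x r E) /\
  (forall x r E, optimal_MSR A s t tau e g E1 x r E ->
     optimal_R A s t tau e g x /\
     Jobj A tau g x r = JRobj A tau e g x - g * \sum_(k : 'I_N) E1 k).
Proof.
have t_neq_s : t != s.
  have t_pos : (0 < n.-1)%N by rewrite -subn1 subn_gt0.
  by apply/eqP => /(congr1 val); rewrite hs ht => t0; rewrite t0 in t_pos.
have lower x r E : feasible A s t e E1 x r E ->
    JRobj A tau e g x - g * \sum_k E1 k <= Jobj A tau g x r.
  exact: (objective_lower_bound tau (ltW hg)).
have tight x (Hx : valid_routing A s t x) :=
  tight_completion tau g t_neq_s hE1 he Hx (hrech x Hx).
split.
  have [x [Hx minx]] := routing_problem_optimum tau e g hpath.
  have [r [E [Hf HJ]]] := tight x Hx.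
  exists x, r, E; split=> // x' r' E' Hf'; have [Hx' _ _ _] := Hf'.
  by rewrite HJ (le_trans _ (lower _ _ _ Hf')) // lerD2r minx.
move=> x r E [Hf opt]; have Hx : valid_routing A s t x by case: Hf.
split; last first.
  have [r0 [E0 [Hf0 HJ0]]] := tight x Hx.
  by apply/le_anti; rewrite (lower _ _ _ Hf) andbT -HJ0 (opt _ _ _ Hf0).
split=> // x' Hx'; have [r' [E' [Hf' HJ']]] := tight x' Hx'.
by have := le_trans (lower _ _ _ Hf) (opt _ _ _ Hf'); rewrite HJ' lerD2r.
Qed.
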